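(* Let $n,r\ge 1$, ${\bf A}\in\mathbb{H}^n$, $g\in\mathcal{G}$, and ${\bf X}_0\in\mathbb{C}^{n\times r}$. Put ${\bf W}_0={\bf X}_0^{\mathrm H}{\bf A}{\bf X}_0$ and ${\bf G}=\nabla g({\bf W}_0)\in\mathbb{H}^r$. Define ${\bf L}({\bf X})$ by $${\bf L}({\bf X})={\bf X}^{\mathrm H}{\bf A}^{(-)}{\bf X}+{\bf X}^{\mathrm H}{\bf A}^{(+)}{\bf X}_0+{\bf X}_0^{\mathrm H}{\bf A}^{(+)}{\bf X}-{\bf X}_0^{\mathrm H}{\bf A}^{(+)}{\bf X}_0\quad\text{if } g \text{ is MND},$$ $${\bf L}({\bf X})={\bf X}^{\mathrm H}{\bf A}^{(+)}{\bf X}+{\bf X}^{\mathrm H}{\bf A}^{(-)}{\bf X}_0+{\bf X}_0^{\mathrm H}{\bf A}^{(-)}{\bf X}-{\bf X}_0^{\mathrm H}{\bf A}^{(-)}{\bf X}_0\quad\text{if } g \text{ is MNI},$$ and $$l({\bf X};{\bf X}_0)=\mathrm{tr}\big({\bf L}({\bf X})^{\mathrm H}{\bf G}\big)+g({\bf W}_0)-\mathrm{tr}({\bf W}_0{\bf G}),\qquad {\bf X}\in\mathbb{C}^{n\times r}.$$ Then: (i) $l(\cdot;{\bf X}_0)$ is a real-valued concave function on $\mathbb{C}^{n\times r}$ (viewed as a real vector space); (ii) $l({\bf X};{\bf X}_0)\le g({\bf X}^{\mathrm H}{\bf A}{\bf X})$ for all ${\bf X}\in\mathbb{C}^{n\times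 r}$; (iii) $l({\bf X}_0;{\bf X}_0)=g({\bf X}_0^{\mathrm H}{\bf A}{\bf X}_0)$; (iv) the functions ${\bf X}\mapsto l({\bf X};{\bf X}_0)$ and ${\bf X}\mapsto g({\bf X}^{\mathrm H}{\bf A}{\bf X})$ have the same (real Fréchet) derivative at ${\bf X}={\bf X}_0$.
   Context: $\mathbb{H}^m$ denotes the real vector space of $m\times m$ complex Hermitian matrices, with inner product $\langle{\bf U},{\bf V}\rangle=\mathrm{tr}({\bf U}{\bf V})$; ${\bf U}\succeq{\bf V}$ means ${\bf U}-{\bf V}$ is positive semidefinite. For ${\bf A}\in\mathbb{H}^n$ with eigen-decomposition ${\bf A}=\sum_i\lambda_i{\bf u}_i{\bf u}_i^{\mathrm H}$ (orthonormal ${\bf u}_i$), ${\bf A}^{(+)}=\sum_{\lambda_i>0}\lambda_i{\bf u}_i{\bf u}_i^{\mathrm H}$ and ${\bf A}^{(-)}=\sum_{\lambda_i<0}\lambda_i{\bf u}_i{\bf u}_i^{\mathrm H}$, so ${\bf A}={\bf A}^{(+)}+{\bf A}^{(-)}$. A function $g:\mathbb{H}^r\to\mathbb{R}$ is MND (matrix nondecreasing) if ${\bf W}_1\succeq{\bf W}_2\Rightarrow g({\bf W}_1)\ge g({\bf W}_2)$, and MNI (matrix nonincreasing) if ${\bf W}_1\succeq{\bf W}_2\Rightarrow g({\bf W}_1)\le g({\bf W}_2)$. $\mathcal{G}$ is the family of differentiable convex functions $g:\mathbb{H}^r\to\mathbb{R}$ that are MND or MNI. For differentiable $g$, $\nabla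 g({\bf W}_0)\in\mathbb{H}^r$ denotes its gradient with respect to the inner product above, i.e. $g({\bf W}_0+\Delta)=g({\bf W}_0)+\mathrm{tr}(\nabla g({\bf W}_0)\Delta)+o(\|\Delta\|)$ for $\Delta\in\mathbb{H}^r$. *)

From HB Require Import structures.
From mathcomp Require Import all_boot all_order all_algebra.
From mathcomp Require Import complex.
From mathcomp Require Import reals.
Set Implicit Arguments.
Unset Strict Implicit.
Unset Printing Implicit Defensive.
Import Order.TTheory GRing.Theory Num.Theory.
Local Open Scope ring_scope.

Section Defs.
Variable R : realType.
Local Notation C := R[i].

Definition ctr m n (M : 'M[C]_(m, n)) : 'M[C]_(n, m) := (map_mx Num.conj M)^T.

Definition is_hermitian m (M : 'M[C]_m) : Prop := ctr M = M.

Definition psd m (M : 'M[C]_m) : Prop :=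
  is_hermitian M /\ forall v : 'cV[C]_m, 0 <= (ctr v *m M *m v) 0 0.

Definition loewner_ge m (U V : 'M[C]_m) : Prop := psd (U - V).

(* g : H^r -> R (represented on all r x r matrices; only Hermitian arguments matter) *)
Definition MND r (g : 'M[C]_r -> R) : Prop :=
  forall W1 W2, is_hermitian W1 -> is_hermitian W2 -> loewner_ge W1 W2 -> g W1 >= g W2.

Definition MNI r (g : 'M[C]_r -> R) : Prop :=
  forall W1 W2, is_hermitian W1 -> is_hermitian W2 -> loewner_ge W1 W2 -> g W1 <= g W2.

Definition convex_on_H r (g : 'M[C]_r -> R) : Prop :=
  forall (U V : 'M[C]_r) (t : R), is_hermitian U -> is_hermitian V -> 0 <= t <= 1 ->
    g (((1 - t)%:C)%C *: U + (t%:C)%C *: V) <= (1 - t) * g U + t * g V.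

Definition fnorm m n (M : 'M[C]_(m, n)) : R :=
  Num.sqrt (\sum_(i < m) \sum_(j < n) (complex.Re (M i j) ^+ 2 + complex.Im (M i j) ^+ 2)).

(* G = ∇g(W0) w.r.t. <U,V> = tr(UV) on H^r :
   g(W0 + Δ) = g(W0) + tr(G Δ) + o(‖Δ‖), Δ ∈ H^r *)
Definition is_gradient r (g : 'M[C]_r -> R) (W0 G : 'M[C]_r) : Prop :=
  is_hermitian G /\
  forall eps : R, 0 < eps -> exists2 delta : R, 0 < delta &
    forall D : 'M[C]_r, is_hermitian D -> fnorm D < delta ->
      `| g (W0 + D) - g W0 - complex.Re (\tr (G *m D)) | <= eps * fnorm D.

Definition differentiable_on_H r (g : 'M[C]_r -> R) : Prop :=
  forall W, is_hermitian W -> exists G, is_gradient g W G.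

Definition in_class_G r (g : 'M[C]_r -> R) : Prop :=
  differentiable_on_H g /\ convex_on_H g /\ (MND g \/ MNI g).

Definition real_linear m n (D : 'M[C]_(m, n) -> R) : Prop :=
  forall (a : R) (X Y : 'M[C]_(m, n)), D ((a%:C)%C *: X + Y) = a * D X + D Y.

Definition frechet_deriv m n (f : 'M[C]_(m, n) -> R) (X0 : 'M[C]_(m, n))
  (D : 'M[C]_(m, n) -> R) : Prop :=
  real_linear D /\
  forall eps : R, 0 < eps -> exists2 delta : R, 0 < delta &
    forall X : 'M[C]_(m, n), fnorm (X - X0) < delta ->
      `| f X - f X0 - D (X - X0) | <= eps * fnorm (X - X0).

Definition concave_fun m n (f : 'M[C]_(m, n) -> R) : Prop :=
  forall (X Y : 'M[C]_(m, n)) (t : R), 0 <= t <= 1 ->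
    (1 - t) * f X + t * f Y <= f (((1 - t)%:C)%C *: X + (t%:C)%C *: Y).

Definition eigen_decomp m (A U : 'M[C]_m) (lam : 'I_m -> R) : Prop :=
  ctr U *m U = 1%:M /\
  A = \sum_(i < m) ((lam i)%:C)%C *: (col i U *m ctr (col i U)).

Definition pos_part m (U : 'M[C]_m) (lam : 'I_m -> R) : 'M[C]_m :=
  \sum_(i < m | 0 < lam i) ((lam i)%:C)%C *: (col i U *m ctr (col i U)).

Definition neg_part m (U : 'M[C]_m) (lam : 'I_m -> R) : 'M[C]_m :=
  \sum_(i < m | lam i < 0) ((lam i)%:C)%C *: (col i U *m ctr (col i U)).

(* L(X): mnd = true is the MND case, mnd = false the MNI case *)
Definition Lmx n r (mnd : bool) (Ap An : 'M[C]_n) (X0 X : 'M[C]_(n, r)) : 'M[C]_r :=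
  if mnd then
    ctr X *m An *m X + ctr X *m Ap *m X0 + ctr X0 *m Ap *m X - ctr X0 *m Ap *m X0
  else
    ctr X *m Ap *m X + ctr X *m An *m X0 + ctr X0 *m An *m X - ctr X0 *m An *m X0.

Definition lmin n r (g : 'M[C]_r -> R) (mnd : bool) (Ap An : 'M[C]_n)
  (X0 : 'M[C]_(n, r)) (W0 G : 'M[C]_r) (X : 'M[C]_(n, r)) : C :=
  \tr (ctr (Lmx mnd Ap An X0 X) *m G) + ((g W0)%:C)%C - \tr (W0 *m G).

End Defs.

(* Split A = P + N, where P = A^(+), N = A^(-) if g is MND and the roles are
   swapped if g is MNI, and write Q_M(X, Y) = Re tr(G X^H M Y) ([bform]).  Both
   hypotheses on g are used only through the gradient G at W0 = X0^H A X0, via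
   the one-sided slope bound [gradient_slope_le]:
   - monotonicity gives Q_P(Y, Y) >= 0 and Q_N(Y, Y) <= 0 ([gradient_signs]);
   - convexity gives g(W) >= g(W0) + Re tr(G (W - W0)) ([gradient_convex]).
   The number l(X; X0) is real and equals [minorant X] =
   Q_N(X,X) + Q_P(X,X0) + Q_P(X0,X) - Q_P(X0,X0) + g(W0) - Q_A(X0,X0)
   ([lmin_minorant]).  Then (i) it is concave since Q_N is nonpositive, (ii) it
   lies below g(X^H A X) since the gap is at least Q_P(X-X0, X-X0) >= 0,
   (iii) it equals g(W0) at X0, and (iv) its linearization error at X0 is
   Q_N(H, H) = O(|H|^2), while X |-> g(X^H A X) has the same derivative by a
   chain rule ([frechet_quadratic_composition]).  The O/o estimates go through
   an entrywise l1 norm, which is submultiplicative and equivalent to fnorm. *)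

From HB Require Import structures.
From mathcomp Require Import all_boot all_order all_algebra.
From mathcomp Require Import complex.
From mathcomp Require Import reals.
From mathcomp Require Import ring lra.
Import Order.TTheory GRing.Theory Num.Theory.
Local Open Scope ring_scope.
Set Implicit Arguments.
Unset Strict Implicit.

Section Preliminaries.
Variable R : realType.
Local Notation C := R[i].
Local Notation Re := complex.Re.

Lemma ReD (x y : C) : Re (x + y) = Re x + Re y.
Proof. exact: (raddfD (@complex.Re R : Rcomplex R -> R)). Qed.

Lemma ReN (x : C) : Re (- x) = - Re x.
Proof. exact: (raddfN (@complex.Re R : Rcomplex R -> R)). Qed.

Lemma ReB (x y : C) : Re (x - y) = Re x - Re y.
Proof. exact: (raddfB (@complex.Re R : Rcomplex R -> R)). Qed.

Lemma Re_sum I (s : seq I) (P : pred I) (F : I -> C) :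
  Re (\sum_(i <- s | P i) F i) = \sum_(i <- s | P i) Re (F i).
Proof. exact: (raddf_sum (@complex.Re R : Rcomplex R -> R)). Qed.

Lemma ReCM (a : R) (x : C) : Re (a%:C%C * x) = a * Re x.
Proof. by case: x => u v /=; rewrite mul0r subr0. Qed.

Lemma Re_trD r (G M1 M2 : 'M[C]_r) :
  Re (\tr (G *m (M1 + M2))) = Re (\tr (G *m M1)) + Re (\tr (G *m M2)).
Proof. by rewrite mulmxDr mxtraceD ReD. Qed.

Lemma Re_trB r (G M1 M2 : 'M[C]_r) :
  Re (\tr (G *m (M1 - M2))) = Re (\tr (G *m M1)) - Re (\tr (G *m M2)).
Proof. by rewrite mulmxBr raddfB ReB. Qed.

Lemma ctrE m n (M : 'M[C]_(m, n)) i j : ctr M i j = Num.conj (M j i).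
Proof. by rewrite /ctr !mxE. Qed.

Lemma ctrM m n p (M : 'M[C]_(m, n)) (N : 'M[C]_(n, p)) :
  ctr (M *m N) = ctr N *m ctr M.
Proof. by rewrite /ctr map_mxM trmx_mul. Qed.

Lemma ctrD m n (M N : 'M[C]_(m, n)) : ctr (M + N) = ctr M + ctr N.
Proof. by rewrite /ctr map_mxD linearD. Qed.

Lemma ctrN m n (M : 'M[C]_(m, n)) : ctr (- M) = - ctr M.
Proof. by rewrite /ctr map_mxN linearN. Qed.

Lemma ctrB m n (M N : 'M[C]_(m, n)) : ctr (M - N) = ctr M - ctr N.
Proof. by rewrite ctrD ctrN. Qed.

Lemma ctr0 m n : ctr (0 : 'M[C]_(m, n)) = 0.
Proof. by rewrite /ctr map_mx0 trmx0. Qed.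

Lemma ctrK m n (M : 'M[C]_(m, n)) : ctr (ctr M) = M.
Proof. by apply/matrixP => i j; rewrite !ctrE conjCK. Qed.

Lemma ctrZ m n (a : R) (M : 'M[C]_(m, n)) : ctr (a%:C%C *: M) = a%:C%C *: ctr M.
Proof. by apply/matrixP => i j; rewrite !mxE rmorphM; congr (_ * _); exact: conjc_real. Qed.

Lemma tr_ctr n (M : 'M[C]_n) : \tr (ctr M) = Num.conj (\tr M).
Proof. by rewrite /mxtrace rmorph_sum; apply: eq_bigr => i _; rewrite ctrE. Qed.

Lemma herm_quad n r (X Y : 'M[C]_(n, r)) (M : 'M[C]_n) : is_hermitian M ->
  ctr (ctr X *m M *m Y) = ctr Y *m M *m X.
Proof. by move=> hM; rewrite !ctrM ctrK hM mulmxA. Qed.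

Lemma quad_herm_self n r (X : 'M[C]_(n, r)) (M : 'M[C]_n) : is_hermitian M ->
  is_hermitian (ctr X *m M *m X).
Proof. by move=> hM; rewrite /is_hermitian herm_quad. Qed.

Lemma tr_herm_real n (L G : 'M[C]_n) : is_hermitian L -> is_hermitian G ->
  \tr (L *m G) = (Re (\tr (G *m L)))%:C%C.
Proof.
move=> hL hG; rewrite mxtrace_mulC RRe_real //; apply/CrealP.
by rewrite -tr_ctr ctrM hG hL mxtrace_mulC.
Qed.

Lemma herm_add n (M N : 'M[C]_n) : is_hermitian M -> is_hermitian N -> is_hermitian (M + N).
Proof. by move=> hM hN; rewrite /is_hermitian ctrD hM hN. Qed.

Lemma herm_scale n (t : R) (M : 'M[C]_n) : is_hermitian M -> is_hermitian (t%:C%C *: M).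
Proof. by move=> hM; rewrite /is_hermitian ctrZ hM. Qed.

Lemma herm_opp n (M : 'M[C]_n) : is_hermitian M -> is_hermitian (- M).
Proof. by move=> hM; rewrite /is_hermitian ctrN hM. Qed.

Lemma psd0 n : psd (0 : 'M[C]_n).
Proof. by split => [|v]; rewrite ?/is_hermitian ?ctr0 // mulmx0 mul0mx mxE. Qed.

Lemma psd_add n (M N : 'M[C]_n) : psd M -> psd N -> psd (M + N).
Proof.
move=> [hM fM] [hN fN]; split => [|v]; first exact: herm_add.
by rewrite mulmxDr mulmxDl mxE addr_ge0.
Qed.

Lemma psd_scale n (t : R) (M : 'M[C]_n) : 0 <= t -> psd M -> psd (t%:C%C *: M).
Proof.
move=> t0 [hM fM]; split => [|v]; first exact: herm_scale.
by rewrite -scalemxAr -scalemxAl mxE mulr_ge0 ?ler0c.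
Qed.

(* u u^H is positive semidefinite: its quadratic form is |u^H v|^2. *)
Lemma psd_rank_one n (u : 'cV[C]_n) : psd (u *m ctr u).
Proof.
split => [|v]; first by rewrite /is_hermitian ctrM ctrK.
have -> : ctr v *m (u *m ctr u) *m v = (ctr v *m u) *m ctr (ctr v *m u).
  by rewrite ctrM ctrK !mulmxA.
by rewrite mxE big_ord1 ctrE mulcJ_ge0.
Qed.

Lemma psd_congr n r (Y : 'M[C]_(n, r)) (M : 'M[C]_n) : psd M -> psd (ctr Y *m M *m Y).
Proof.
move=> [hM fM]; split => [|v]; first exact: quad_herm_self.
have -> : ctr v *m (ctr Y *m M *m Y) *m v = ctr (Y *m v) *m M *m (Y *m v).
  by rewrite ctrM !mulmxA.
exact: fM.
Qed.

Lemma psd_spectral_sum n (U : 'M[C]_n) (mu : 'I_n -> R) (P : pred 'I_n) :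
  (forall i, P i -> 0 <= mu i) ->
  psd (\sum_(i | P i) (mu i)%:C%C *: (col i U *m ctr (col i U))).
Proof.
move=> hmu; apply: big_rec => [|i M Pi hM]; first exact: psd0.
by apply: psd_add hM; apply: psd_scale (psd_rank_one _); exact: hmu.
Qed.

Lemma pos_part_psd n (U : 'M[C]_n) (lam : 'I_n -> R) : psd (pos_part U lam).
Proof. by apply: psd_spectral_sum => i /ltW. Qed.

Lemma neg_part_nsd n (U : 'M[C]_n) (lam : 'I_n -> R) : psd (- neg_part U lam).
Proof.
rewrite /neg_part -sumrN.
under eq_bigr do rewrite -scaleNr -rmorphN.
by apply: psd_spectral_sum => i /ltW; rewrite oppr_ge0.
Qed.

Lemma neg_part_herm n (U : 'M[C]_n) (lam : 'I_n -> R) : is_hermitian (neg_part U lam).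
Proof. by have := (neg_part_nsd U lam).1; rewrite /is_hermitian ctrN => /oppr_inj. Qed.

(* A = A^(+) + A^(-): the eigenvalues equal to zero contribute nothing. *)
Lemma eigen_split n (A U : 'M[C]_n) (lam : 'I_n -> R) :
  eigen_decomp A U lam -> A = pos_part U lam + neg_part U lam.
Proof.
case=> _ ->; rewrite (bigID (fun i => 0 < lam i)) /=; congr (_ + _).
rewrite (bigID (fun i => lam i < 0)) /= [X in _ + X]big1 ?addr0.
  by apply: eq_bigl => i; case: (ltrgtP (lam i) 0).
move=> i /andP [h1 h2].
have -> : lam i = 0 by case: (ltrgtP (lam i) 0) h1 h2.
by rewrite scale0r.
Qed.

Lemma le_of_eps (a b c : R) : 0 <= c ->
  (forall eps, 0 < eps -> a <= b + eps * c) -> a <= b.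
Proof.
move=> c0 h; apply/ler_addgt0Pr => e e0.
have c1 : 0 < c + 1 by lra.
have := h (e / (c + 1)) (divr_gt0 e0 c1).
have : e / (c + 1) * c <= e by rewrite mulrAC ler_pdivrMr // ler_pM2l //; lra.
move=> h1 h2; lra.
Qed.

Lemma fnorm_ge0 m n (M : 'M[C]_(m, n)) : 0 <= fnorm M.
Proof. exact: sqrtr_ge0. Qed.

Lemma fnormZ m n (t : R) (M : 'M[C]_(m, n)) : 0 <= t ->
  fnorm (t%:C%C *: M) = t * fnorm M.
Proof.
move=> t0; have entry (x : C) : Re (t%:C%C * x) ^+ 2 + complex.Im (t%:C%C * x) ^+ 2
    = t ^+ 2 * (Re x ^+ 2 + complex.Im x ^+ 2) by case: x => u v /=; ring.
rewrite /fnorm; under eq_bigr do under eq_bigr do rewrite mxE entry.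
under eq_bigr do rewrite -mulr_sumr.
by rewrite -mulr_sumr sqrtrM ?sqr_ge0 // sqrtr_sqr ger0_norm.
Qed.

Section Gradient.
Variables (r : nat) (g : 'M[C]_r -> R) (W0 G : 'M[C]_r).
Hypotheses (hgrad : is_gradient g W0 G) (hW0 : is_hermitian W0).

Lemma gradient_slope_le D (c : R) : is_hermitian D ->
  (forall t, 0 < t -> t <= 1 -> g (W0 + t%:C%C *: D) - g W0 <= t * c) ->
  Re (\tr (G *m D)) <= c.
Proof.
move=> hD hslope; apply: (le_of_eps (fnorm_ge0 D)) => eps e0.
have [delta d0 hd] := hgrad.2 eps e0.
set f := fnorm D; have f0 : 0 <= f := fnorm_ge0 D.
have f1 : 0 < f + 1 by lra.
pose t := Num.min 1 (delta / (f + 1)).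
have t0 : 0 < t by rewrite lt_min ltr01 divr_gt0.
have t1 : t <= 1 by rewrite ge_min lexx.
have small : fnorm (t%:C%C *: D) < delta.
  have : t * f <= delta / (f + 1) * f by apply: ler_wpM2r; rewrite // ge_min lexx orbT.
  have : delta / (f + 1) * f < delta by rewrite mulrAC ltr_pdivrMr // ltr_pM2l //; lra.
  rewrite fnormZ ?(ltW t0) // -/f => h1 h2; lra.
have := hd _ (herm_scale t hD) small.
rewrite fnormZ ?(ltW t0) // -/f -scalemxAr mxtraceZ ReCM ler_norml => /andP [lo _].
have := hslope t t0 t1; set a := Re _ => up.
have scaled : t * a <= t * (c + eps * f) by nra.
by rewrite ler_pM2l in scaled.
Qed.

Lemma gradient_MND_psd P : MND g -> psd P -> 0 <= Re (\tr (G *m P)).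
Proof.
move=> hm hP; have hnegP : is_hermitian (- P) := herm_opp hP.1.
suff : Re (\tr (G *m - P)) <= 0 by rewrite mulmxN raddfN ReN oppr_le0.
apply: (gradient_slope_le hnegP) => t t0 _; rewrite mulr0 subr_le0.
apply: hm => //; first exact: herm_add hW0 (herm_scale t hnegP).
by rewrite /loewner_ge opprD addrA subrr add0r scalerN opprK; exact: psd_scale (ltW t0) hP.
Qed.

Lemma gradient_MNI_psd P : MNI g -> psd P -> Re (\tr (G *m P)) <= 0.
Proof.
move=> hm hP; apply: (gradient_slope_le hP.1) => t t0 _; rewrite mulr0 subr_le0.
apply: hm => //; first exact: herm_add hW0 (herm_scale t hP.1).
by rewrite /loewner_ge addrC addKr; exact: psd_scale (ltW t0) hP.
Qed.

Lemma gradient_convex W : convex_on_H g -> is_hermitian W ->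
  g W0 + Re (\tr (G *m (W - W0))) <= g W.
Proof.
move=> hconv hW.
suff : Re (\tr (G *m (W - W0))) <= g W - g W0 by lra.
apply: gradient_slope_le (herm_add hW (herm_opp hW0)) _ => t t0 t1.
have := hconv W0 W t hW0 hW; rewrite (ltW t0) t1 => /(_ isT).
have -> : (1 - t)%:C%C *: W0 + t%:C%C *: W = W0 + t%:C%C *: (W - W0).
  by rewrite rmorphB rmorph1 scalerBl scale1r scalerBr addrAC addrA.
move=> h; lra.
Qed.

End Gradient.

Local Notation normc := (@Normc.normc R).

Lemma normc_ge0 (z : C) : 0 <= normc z.
Proof. by case: z => a b; exact: sqrtr_ge0. Qed.

Lemma normc_sqr (z : C) : normc z ^+ 2 = Re z ^+ 2 + complex.Im z ^+ 2.
Proof. by case: z => a b; rewrite /= sqr_sqrtr // addr_ge0 ?sqr_ge0. Qed.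

Lemma Re_le_normc (z : C) : `|Re z| <= normc z.
Proof. by case: z => a b; rewrite /= -sqrtr_sqr ler_sqrt ?addr_ge0 ?sqr_ge0 // lerDl sqr_ge0. Qed.

Lemma normcJ (z : C) : normc (Num.conj z) = normc z.
Proof. by case: z => a b; rewrite /= sqrrN. Qed.

Lemma normc_sum I (s : seq I) (P : pred I) (F : I -> C) :
  normc (\sum_(i <- s | P i) F i) <= \sum_(i <- s | P i) normc (F i).
Proof.
apply: (big_ind2 (fun x y => normc x <= y)); first by rewrite Normc.normc0.
  by move=> x1 x2 y1 y2 h1 h2; apply: le_trans (le_normcD _ _) (lerD h1 h2).
by [].
Qed.

Lemma term_le_sum (I : finType) (F : I -> R) i : (forall j, 0 <= F j) -> F i <= \sum_j F j.
Proof. by move=> F0; rewrite (bigD1 i) //= lerDl sumr_ge0. Qed.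

Lemma entry_le_dsum m n (F : 'I_m -> 'I_n -> R) i j : (forall i j, 0 <= F i j) ->
  F i j <= \sum_i \sum_j F i j.
Proof.
move=> F0; apply: le_trans (term_le_sum (F := F i) j (F0 i)) _.
by apply: (term_le_sum (F := fun k => \sum_l F k l)) => k; apply: sumr_ge0 => l _.
Qed.

(* The entrywise l1 norm: visibly submultiplicative, and equivalent to fnorm. *)
Definition l1norm m n (M : 'M[C]_(m, n)) : R := \sum_i \sum_j normc (M i j).

Lemma l1norm_ge0 m n (M : 'M[C]_(m, n)) : 0 <= l1norm M.
Proof. by apply: sumr_ge0 => i _; apply: sumr_ge0 => j _; exact: normc_ge0. Qed.

Lemma l1normD m n (M N : 'M[C]_(m, n)) : l1norm (M + N) <= l1norm M + l1norm N.
Proof.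
rewrite /l1norm -big_split /=; apply: ler_sum => i _.
by rewrite -big_split /=; apply: ler_sum => j _; rewrite mxE le_normcD.
Qed.

Lemma l1norm_ctr m n (M : 'M[C]_(m, n)) : l1norm (ctr M) = l1norm M.
Proof.
rewrite /l1norm exchange_big /=.
by apply: eq_bigr => i _; apply: eq_bigr => j _; rewrite ctrE normcJ.
Qed.

Lemma l1normM m n p (M : 'M[C]_(m, n)) (N : 'M[C]_(n, p)) :
  l1norm (M *m N) <= l1norm M * l1norm N.
Proof.
have rowN j : \sum_k normc (N j k) <= l1norm N.
  rewrite /l1norm; apply: (term_le_sum (F := fun j => \sum_k normc (N j k))) => j'.
  by apply: sumr_ge0 => k _; exact: normc_ge0.
apply: (@le_trans _ _ (\sum_i \sum_k \sum_j normc (M i j) * normc (N j k))).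
  apply: ler_sum => i _; apply: ler_sum => k _; rewrite mxE.
  by apply: le_trans (normc_sum _ _ _) _; apply: ler_sum => j _; rewrite Normc.normcM.
rewrite [l1norm M]/l1norm mulr_suml; apply: ler_sum => i _; rewrite exchange_big mulr_suml /=.
apply: ler_sum => j _; rewrite -mulr_sumr.
by apply: ler_wpM2l; [exact: normc_ge0 | exact: rowN].
Qed.

Lemma Re_tr_le_l1norm n (M : 'M[C]_n) : `|Re (\tr M)| <= l1norm M.
Proof.
rewrite /mxtrace Re_sum; apply: le_trans (ler_norm_sum _ _ _) _.
apply: ler_sum => i _; apply: le_trans (Re_le_normc _) _.
by apply: (term_le_sum (F := fun j => normc (M i j))) => j; exact: normc_ge0.
Qed.

Lemma fnormE m n (M : 'M[C]_(m, n)) : fnorm M = Num.sqrt (\sum_i \sum_j normc (M i j) ^+ 2).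
Proof. by rewrite /fnorm; under eq_bigr do under eq_bigr do rewrite -normc_sqr. Qed.

Lemma normc_le_fnorm m n (M : 'M[C]_(m, n)) i j : normc (M i j) <= fnorm M.
Proof.
rewrite fnormE -(ger0_norm (normc_ge0 (M i j))) -sqrtr_sqr ler_sqrt.
  by apply: (entry_le_dsum (F := fun i j => normc (M i j) ^+ 2)) => *; exact: sqr_ge0.
by apply: sumr_ge0 => i' _; apply: sumr_ge0 => j' _; exact: sqr_ge0.
Qed.

Lemma fnorm_le_l1norm m n (M : 'M[C]_(m, n)) : fnorm M <= l1norm M.
Proof.
have S0 := l1norm_ge0 M.
rewrite fnormE -(ger0_norm S0) -sqrtr_sqr ler_sqrt ?sqr_ge0 // expr2 {2}/l1norm mulr_sumr.
apply: ler_sum => i _; rewrite mulr_sumr; apply: ler_sum => j _.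
rewrite expr2 mulrC; apply: ler_wpM2r; first exact: normc_ge0.
by apply: (entry_le_dsum (F := fun i j => normc (M i j))) => *; exact: normc_ge0.
Qed.

Lemma l1norm_le_fnorm m n (M : 'M[C]_(m, n)) : l1norm M <= (m * n)%:R * fnorm M.
Proof.
apply: (@le_trans _ _ (\sum_(i < m) \sum_(j < n) fnorm M)).
  by apply: ler_sum => i _; apply: ler_sum => j _; exact: normc_le_fnorm.
by rewrite !sumr_const !card_ord -mulrnA mulr_natl mulnC.
Qed.

Lemma l1norm_quad n r (X Y : 'M[C]_(n, r)) (M : 'M[C]_n) :
  l1norm (ctr X *m M *m Y) <= l1norm X * l1norm M * l1norm Y.
Proof.
apply: le_trans (l1normM _ _) _; apply: ler_wpM2r; first exact: l1norm_ge0.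
by apply: le_trans (l1normM _ _) _; rewrite l1norm_ctr.
Qed.

End Preliminaries.

(* It is
   locked so that arithmetic decision procedures treat it as an atom. *)
HB.lock Definition bform (R : realType) r n (G : 'M[R[i]]_r) (M : 'M[R[i]]_n)
    (X Y : 'M[R[i]]_(n, r)) : R :=
  complex.Re (\tr (G *m (ctr X *m M *m Y))).

Section Minorization.
Variable R : realType.
Local Notation C := R[i].
Local Notation Re := complex.Re.

Lemma bformE r n (G : 'M[C]_r) (M : 'M[C]_n) (X Y : 'M[C]_(n, r)) :
  bform G M X Y = Re (\tr (G *m (ctr X *m M *m Y))).
Proof. by rewrite unlock. Qed.

Section Bilinearity.
Variables (n r : nat) (G : 'M[C]_r).
Implicit Types (M : 'M[C]_n) (X Y : 'M[C]_(n, r)).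

Lemma bformDl M (X1 X2 Y : 'M[C]_(n, r)) : bform G M (X1 + X2) Y = bform G M X1 Y + bform G M X2 Y.
Proof. by rewrite !bformE ctrD !mulmxDl mulmxDr mxtraceD ReD. Qed.

Lemma bformDr M (X Y1 Y2 : 'M[C]_(n, r)) : bform G M X (Y1 + Y2) = bform G M X Y1 + bform G M X Y2.
Proof. by rewrite !bformE !mulmxDr mxtraceD ReD. Qed.

Lemma bformDm M1 M2 X Y : bform G (M1 + M2) X Y = bform G M1 X Y + bform G M2 X Y.
Proof. by rewrite !bformE !mulmxDr mulmxDl mulmxDr mxtraceD ReD. Qed.

Lemma bformNl M X Y : bform G M (- X) Y = - bform G M X Y.
Proof. by rewrite !bformE ctrN !mulNmx mulmxN raddfN ReN. Qed.

Lemma bformNr M X Y : bform G M X (- Y) = - bform G M X Y.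
Proof. by rewrite !bformE !mulmxN raddfN ReN. Qed.

Lemma bformNm M X Y : bform G (- M) X Y = - bform G M X Y.
Proof. by rewrite !bformE mulmxN mulNmx mulmxN raddfN ReN. Qed.

Lemma bformZl M (a : R) X Y : bform G M (a%:C%C *: X) Y = a * bform G M X Y.
Proof. by rewrite !bformE ctrZ -!scalemxAl -scalemxAr mxtraceZ ReCM. Qed.

Lemma bformZr M (a : R) X Y : bform G M X (a%:C%C *: Y) = a * bform G M X Y.
Proof. by rewrite !bformE -!scalemxAr mxtraceZ ReCM. Qed.

(* Re tr(G Δ) for Δ = H^H M H + H^H M X0 + X0^H M H, the increment of X^H M X. *)
Lemma Re_tr_increment M (X0 H : 'M[C]_(n, r)) :
  Re (\tr (G *m (ctr H *m M *m H + ctr H *m M *m X0 + ctr X0 *m M *m H)))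
  = bform G M H H + bform G M H X0 + bform G M X0 H.
Proof. by rewrite !Re_trD !bformE. Qed.

Lemma bform_segment M X Y (t : R) :
  let Z := (1 - t)%:C%C *: X + t%:C%C *: Y in
  bform G M Z Z = (1 - t) * bform G M X X + t * bform G M Y Y
                  - t * (1 - t) * bform G M (X - Y) (X - Y).
Proof.
rewrite /= !(bformDl, bformDr, bformNl, bformNr, bformZl, bformZr).
move: (bform G M X X) (bform G M X Y) (bform G M Y X) (bform G M Y Y) => a b c d.
ring.
Qed.

End Bilinearity.

Lemma bform_quadratic_bound n r (G : 'M[C]_r) (M : 'M[C]_n) (H : 'M[C]_(n, r)) :
  `|bform G M H H| <= l1norm G * l1norm M * (n * r)%:R ^+ 2 * fnorm H ^+ 2.
Proof.
rewrite bformE; have h0 := l1norm_ge0 H; have hH := l1norm_le_fnorm H.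
have gm : 0 <= l1norm G * l1norm M by rewrite mulr_ge0 ?l1norm_ge0.
apply: le_trans (Re_tr_le_l1norm _) _; apply: le_trans (l1normM _ _) _.
have hHH : l1norm H * l1norm H <= ((n * r)%:R * fnorm H) ^+ 2.
  by rewrite expr2; apply: ler_pM.
have := l1norm_quad H H M; have := l1norm_ge0 G.
nra.
Qed.

(* The sign pattern behind the minorant: the gradient pairs nonnegatively with
   the part of A that is linearized (A^(+) for MND g, A^(-) for MNI g) and
   nonpositively with the part that is kept. *)
Lemma gradient_signs r (g : 'M[C]_r -> R) (W0 G : 'M[C]_r) (mnd : bool) n (U : 'M[C]_n)
    (lam : 'I_n -> R) :
  is_gradient g W0 G -> is_hermitian W0 -> (if mnd then MND g else MNI g) ->
  (forall Y : 'M[C]_(n, r), 0 <= bform G (if mnd then pos_part U lam else neg_part U lam) Y Y) /\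
  (forall Y : 'M[C]_(n, r), bform G (if mnd then neg_part U lam else pos_part U lam) Y Y <= 0).
Proof.
move=> hgrad hW0.
have pos (Y : 'M[C]_(n, r)) : psd (ctr Y *m pos_part U lam *m Y) := psd_congr Y (pos_part_psd U lam).
have neg (Y : 'M[C]_(n, r)) : psd (ctr Y *m - neg_part U lam *m Y) := psd_congr Y (neg_part_nsd U lam).
case: mnd => hm; split => Y /=.
- by rewrite bformE; exact: (gradient_MND_psd hgrad hW0 hm (pos Y)).
- by have := gradient_MND_psd hgrad hW0 hm (neg Y); rewrite -bformE bformNm oppr_ge0.
- by have := gradient_MNI_psd hgrad hW0 hm (neg Y); rewrite -bformE bformNm oppr_le0.
- by rewrite bformE; exact: (gradient_MNI_psd hgrad hW0 hm (pos Y)).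
Qed.

Definition little_o m n (P : 'M[C]_(m, n) -> Prop) (rho : 'M[C]_(m, n) -> R) : Prop :=
  forall eps : R, 0 < eps -> exists2 delta : R, 0 < delta &
    forall H, P H -> fnorm H < delta -> `|rho H| <= eps * fnorm H.

Section LittleO.
Variables (m n : nat) (P : 'M[C]_(m, n) -> Prop).

Lemma little_o_add (rho rho1 rho2 : 'M[C]_(m, n) -> R) :
  (forall H, P H -> rho H = rho1 H + rho2 H) ->
  little_o P rho1 -> little_o P rho2 -> little_o P rho.
Proof.
move=> split_rho h1 h2 eps e0; have e2 : 0 < eps / 2 by rewrite divr_gt0.
have [d1 d10 hd1] := h1 _ e2; have [d2 d20 hd2] := h2 _ e2.
exists (Num.min d1 d2) => [|H PH]; first by rewrite lt_min d10.
rewrite lt_min => /andP [s1 s2]; rewrite split_rho //.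
apply: le_trans (ler_normD _ _) _.
have := hd1 H PH s1; have := hd2 H PH s2; rewrite {3}(splitr eps) mulrDl.
lra.
Qed.

Lemma little_o_quadratic (rho : 'M[C]_(m, n) -> R) (K : R) : 0 <= K ->
  (forall H, P H -> `|rho H| <= K * fnorm H ^+ 2) -> little_o P rho.
Proof.
move=> K0 hK eps e0; have K1 : 0 < K + 1 by lra.
exists (eps / (K + 1)) => [|H PH small]; first exact: divr_gt0.
apply: le_trans (hK H PH) _; have f0 := fnorm_ge0 H.
have : K * fnorm H <= eps.
  apply: (@le_trans _ _ ((K + 1) * fnorm H)); first by nra.
  by rewrite mulrC -ler_pdivlMr // ltW.
by move=> hk; rewrite expr2 mulrA; apply: ler_wpM2r.
Qed.

Lemma little_o_comp p q (Q : 'M[C]_(p, q) -> Prop) (rho : 'M[C]_(p, q) -> R)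
    (sigma : 'M[C]_(m, n) -> 'M[C]_(p, q)) (c : R) :
  0 <= c -> little_o Q rho -> (forall H, P H -> Q (sigma H)) ->
  (forall H, P H -> fnorm H < 1 -> fnorm (sigma H) <= c * fnorm H) ->
  little_o P (fun H => rho (sigma H)).
Proof.
move=> c0 hrho hQ hsigma eps e0; have c1 : 0 < c + 1 by lra.
have [d d0 hd] := hrho (eps / (c + 1)) (divr_gt0 e0 c1).
exists (Num.min 1 (d / (c + 1))) => [|H PH]; first by rewrite lt_min ltr01 divr_gt0.
rewrite lt_min => /andP [s1 s2]; have f0 := fnorm_ge0 H.
have hs := hsigma H PH s1.
have fs : fnorm H * (c + 1) < d by rewrite -ltr_pdivlMr.
have small : fnorm (sigma H) < d by nra.
apply: le_trans (hd _ (hQ _ PH) small) _.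
have ec : eps / (c + 1) * c <= eps by rewrite mulrAC ler_pdivrMr // ler_pM2l //; lra.
have e1 : 0 <= eps / (c + 1) by rewrite divr_ge0 // ltW.
nra.
Qed.

End LittleO.

Lemma frechet_of_little_o m n (f : 'M[C]_(m, n) -> R) X0 (D : 'M[C]_(m, n) -> R) :
  real_linear D -> little_o (fun _ => True) (fun H => f (H + X0) - f X0 - D H) ->
  frechet_deriv f X0 D.
Proof.
move=> hD ho; split => // eps e0; have [d d0 hd] := ho eps e0.
by exists d => // X hX; have := hd (X - X0) I hX; rewrite subrK.
Qed.

Lemma frechet_deriv_ext m n (f1 f2 : 'M[C]_(m, n) -> R) X0 D :
  (forall X, f1 X = f2 X) -> frechet_deriv f1 X0 D -> frechet_deriv f2 X0 D.
Proof.
move=> e [hD hf]; split => // eps e0; have [d d0 hd] := hf eps e0.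
by exists d => // X; rewrite -!e; exact: hd.
Qed.

Lemma bform_derivative_linear n r (G : 'M[C]_r) (M : 'M[C]_n) (X0 : 'M[C]_(n, r)) :
  real_linear (fun H => bform G M X0 H + bform G M H X0).
Proof. by move=> a X Y; rewrite bformDr bformZr bformDl bformZl mulrDr addrACA. Qed.

Section QuadraticComposition.
Variables (n r : nat) (A : 'M[C]_n) (X0 : 'M[C]_(n, r)).
Hypothesis hA : is_hermitian A.

Definition quad_increment (H : 'M[C]_(n, r)) : 'M[C]_r :=
  ctr H *m A *m H + ctr H *m A *m X0 + ctr X0 *m A *m H.

Lemma quad_incrementE H :
  ctr (H + X0) *m A *m (H + X0) = quad_increment H + ctr X0 *m A *m X0.
Proof. by rewrite /quad_increment ctrD !mulmxDl !mulmxDr !addrA. Qed.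

Lemma quad_increment_herm H : is_hermitian (quad_increment H).
Proof.
rewrite /is_hermitian /quad_increment !ctrD !herm_quad //.
by rewrite -addrA [ctr X0 *m A *m H + _]addrC addrA.
Qed.

Lemma quad_increment_lipschitz H : fnorm H < 1 ->
  fnorm (quad_increment H)
  <= (2 * l1norm X0 * l1norm A + l1norm A * (n * r)%:R) * (n * r)%:R * fnorm H.
Proof.
move=> f1; have f0 := fnorm_ge0 H; have hH := l1norm_le_fnorm H.
have h0 := l1norm_ge0 H; have a0 := l1norm_ge0 A; have x0 := l1norm_ge0 X0.
have k0 : 0 <= (n * r)%:R :> R := ler0n _ _.
apply: le_trans (fnorm_le_l1norm _) _.
have inc : l1norm (quad_increment H)
    <= l1norm H * l1norm A * l1norm H + l1norm H * l1norm A * l1norm X0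
       + l1norm X0 * l1norm A * l1norm H.
  apply: le_trans (l1normD _ _) _; apply: lerD; last exact: l1norm_quad.
  by apply: le_trans (l1normD _ _) _; apply: lerD; exact: l1norm_quad.
have hh : l1norm H * l1norm H <= (n * r)%:R ^+ 2 * fnorm H.
  apply: (@le_trans _ _ (((n * r)%:R * fnorm H) ^+ 2)); first by rewrite expr2; apply: ler_pM.
  by rewrite exprMn ler_wpM2l ?sqr_ge0 //; nra.
have xa : 0 <= l1norm X0 * l1norm A by rewrite mulr_ge0.
nra.
Qed.

Variables (g : 'M[C]_r -> R) (G : 'M[C]_r).
Hypothesis hgrad : is_gradient g (ctr X0 *m A *m X0) G.

Lemma frechet_quadratic_composition :
  frechet_deriv (fun X => g (ctr X *m A *m X)) X0
    (fun H => bform G A X0 H + bform G A H X0).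
Proof.
apply: frechet_of_little_o; first exact: bform_derivative_linear.
pose W0 := ctr X0 *m A *m X0.
pose rhoG D := g (W0 + D) - g W0 - Re (\tr (G *m D)).
apply: (@little_o_add _ _ _ _ (fun H => rhoG (quad_increment H)) (fun H => bform G A H H)).
- move=> H _; rewrite /rhoG /W0 quad_incrementE [quad_increment H + _]addrC Re_tr_increment.
  by set u := g _ - g _; lra.
- apply: (little_o_comp _ hgrad.2 (fun H _ => quad_increment_herm H)
           (fun H _ => quad_increment_lipschitz (H := H))).
  by rewrite !(mulr_ge0, addr_ge0, ler0n, l1norm_ge0).
- apply: (little_o_quadratic (K := l1norm G * l1norm A * (n * r)%:R ^+ 2)).
    by rewrite !mulr_ge0 ?l1norm_ge0 ?sqr_ge0.
  by move=> H _; exact: bform_quadratic_bound.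
Qed.

End QuadraticComposition.

Section Minorant.
Variables (n r : nat) (g : 'M[C]_r -> R) (A P N : 'M[C]_n) (X0 : 'M[C]_(n, r)).
Variable G : 'M[C]_r.
Hypotheses (hAPN : A = P + N) (hP : is_hermitian P) (hN : is_hermitian N).
Hypotheses (Psign : forall Y, 0 <= bform G P Y Y) (Nsign : forall Y, bform G N Y Y <= 0).
Hypothesis hgrad : is_gradient g (ctr X0 *m A *m X0) G.

Local Notation W0 := (ctr X0 *m A *m X0).

(* The real-valued form of l(X; X0): the quadratic N-part of X^H A X is kept,
   the P-part is replaced by its linearization at X0. *)
Definition minorant (X : 'M[C]_(n, r)) : R :=
  bform G N X X + bform G P X X0 + bform G P X0 X - bform G P X0 X0
  + g W0 - bform G A X0 X0.

(* (i) concavity: a nonpositive quadratic form plus an affine function. *)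
Lemma minorant_concave : concave_fun minorant.
Proof.
move=> X Y t /andP [t0 t1]; rewrite /minorant bform_segment.
have q0 := Nsign (X - Y); set q := bform G N (X - Y) _ in q0 *.
rewrite !(bformDl, bformDr, bformZl, bformZr).
have tt : 0 <= t * (1 - t) by rewrite mulr_ge0 // subr_ge0.
nra.
Qed.

(* (ii) minorization: tangent plane of convex g plus P(X - X0, X - X0) >= 0. *)
Lemma minorant_le (hconv : convex_on_H g) X : minorant X <= g (ctr X *m A *m X).
Proof.
have hA : is_hermitian A by rewrite hAPN; exact: herm_add.
have := gradient_convex hgrad (quad_herm_self X0 hA) hconv (quad_herm_self X hA).
rewrite Re_trB -!bformE.
have := Psign (X - X0); rewrite /minorant hAPN !bformDm.
rewrite !(bformDl, bformDr, bformNl, bformNr); lra.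
Qed.

Lemma minorant_X0 : minorant X0 = g W0.
Proof. by rewrite /minorant hAPN bformDm; lra. Qed.

(* (iv) same derivative as X |-> g(X^H A X): the error is N(H, H) = O(fnorm H ^ 2). *)
Lemma minorant_frechet :
  frechet_deriv minorant X0 (fun H => bform G A X0 H + bform G A H X0).
Proof.
apply: frechet_of_little_o; first exact: bform_derivative_linear.
apply: (little_o_quadratic (K := l1norm G * l1norm N * (n * r)%:R ^+ 2)).
  by rewrite !mulr_ge0 ?l1norm_ge0 ?sqr_ge0.
move=> H _; have -> : minorant (H + X0) - minorant X0 - (bform G A X0 H + bform G A H X0)
    = bform G N H H.
  by rewrite /minorant hAPN !(bformDm, bformDl, bformDr); lra.
exact: bform_quadratic_bound.
Qed.

Lemma lmin_minorant X : lmin g true P N X0 W0 G X = (minorant X)%:C%C.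
Proof.
have hG : is_hermitian G := hgrad.1.
have hA : is_hermitian A by rewrite hAPN; exact: herm_add.
rewrite /lmin /Lmx; set L := (ctr X *m N *m X + _ + _ - _); have hL : is_hermitian L.
  rewrite /is_hermitian /L ctrB !ctrD !herm_quad //.
  by rewrite [ctr X *m N *m X + _ + _]addrAC.
rewrite hL (tr_herm_real hL hG) (tr_herm_real (quad_herm_self X0 hA) hG) -rmorphD -rmorphB.
congr (_%:C%C); rewrite /L Re_trB !Re_trD -!bformE /minorant; lra.
Qed.

End Minorant.
End Minorization.

Unset Implicit Arguments.

Theorem theorem1 (R : realType) (n r : nat) (A U : 'M[R[i]]_n) (lam : 'I_n -> R)
  (g : 'M[R[i]]_r -> R) (mnd : bool) (X0 : 'M[R[i]]_(n, r)) (G : 'M[R[i]]_r) :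
  (0 < n)%N -> (0 < r)%N ->
  is_hermitian A -> eigen_decomp A U lam ->
  in_class_G g -> (if mnd then MND g else MNI g) ->
  is_gradient g (ctr X0 *m A *m X0) G ->
  let W0 := ctr X0 *m A *m X0 in
  let l := lmin g mnd (pos_part U lam) (neg_part U lam) X0 W0 G in
  [/\ (forall X, l X \is Num.real) /\ concave_fun (fun X => complex.Re (l X)),
      (forall X : 'M[R[i]]_(n, r), l X <= ((g (ctr X *m A *m X))%:C)%C),
      l X0 = ((g W0)%:C)%C &
      exists D : 'M[R[i]]_(n, r) -> R,
        frechet_deriv (fun X => complex.Re (l X)) X0 D /\
        frechet_deriv (fun X => g (ctr X *m A *m X)) X0 D].
Proof.
move=> _ _ hA hdec [_ [hconv _]] hmon hgrad W0 l.
pose P := if mnd then pos_part U lam else neg_part U lam.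
pose N := if mnd then neg_part U lam else pos_part U lam.
have hAPN : A = P + N by rewrite /P /N (eigen_split hdec); case: (mnd); rewrite // addrC.
have [hP hN] : is_hermitian P /\ is_hermitian N.
  by rewrite /P /N; case: (mnd); split; apply: (pos_part_psd U lam).1 || apply: neg_part_herm.
have [Psign Nsign] := gradient_signs U lam hgrad (quad_herm_self X0 hA) hmon.
have hl X : l X = (minorant g A P N X0 G X)%:C%C.
  by rewrite -(lmin_minorant hAPN hP hN hgrad) /l /lmin /Lmx /P /N; case: (mnd).
split.
- split => [X | X Y t ht]; first by rewrite hl; apply/complex_realP; eexists.
  by rewrite !hl; exact: minorant_concave Nsign X Y t ht.
- by move=> X; rewrite hl lecR; exact: minorant_le hAPN hP hN Psign hgrad hconv X.
- by rewrite hl minorant_X0.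
- exists (fun H => bform G A X0 H + bform G A H X0); split.
    by apply: frechet_deriv_ext (minorant_frechet g X0 G hAPN) => X; rewrite hl.
  exact: (frechet_quadratic_composition hA hgrad).
Qed.
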